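(* Let $R$ be a set and $\mathcal{G}:(\mathbf{1},R)\rightarrow(Y,R)$ an object of $\mathrm{2Open}_R$. Then the $\omega$-iteration $\mathcal{G}_\omega$ of $\mathcal{G}$ is an $F_\mathcal{G}$-coalgebra with coalgebra map $\alpha=(\langle\mathrm{now},\mathrm{ltr}\rangle,\langle\mathrm{hd},\mathrm{tl}\rangle):\mathcal{G}_\omega\rightarrow F_\mathcal{G}\mathcal{G}_\omega$, i.e. this pair of functions is a morphism in $\mathrm{2Open}_R$.
   Context: Fix a set $R$. Objects of $\mathrm{2Open}_R$ are open games $\mathcal{H}:(\mathbf{1},R)\rightarrow(Y_\mathcal{H},R)$ given by a strategy set $\Sigma_\mathcal{H}$, a move set $Y_\mathcal{H}$, a play function $P_\mathcal{H}:\Sigma_\mathcal{H}\rightarrow Y_\mathcal{H}$, an equilibrium function $E_\mathcal{H}:(Y_\mathcal{H}\rightarrow R)\rightarrow\mathcal{P}\Sigma_\mathcal{H}$, and identity coutility $C\,\sigma\,r=r$. A morphism $\beta:\mathcal{H}\rightarrow\mathcal{H}'$ is a pair $\beta_Y:Y_\mathcal{H}\rightarrow Y_{\mathcal{H}'}$, $\beta_\Sigma:\Sigma_\mathcal{H}\rightarrow\Sigma_{\mathcal{H}'}$ with $\beta_Y(P_\mathcal{H}\sigma)=P_{\mathcal{H}'}(\beta_\Sigma\sigma)$ for all $\sigma$, and such that for all $\sigma\in\Sigma_\mathcal{H}$ and $k:Y_{\mathcal{H}'}\rightarrow R$, $\sigma\in E_\mathcal{H}(k\circ\beta_Y)$ implies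 $\beta_\Sigma(\sigma)\in E_{\mathcal{H}'}(k)$. For the fixed $\mathcal{G}$ (data $\Sigma_\mathcal{G},Y,P_\mathcal{G},E_\mathcal{G}$) and any object $\mathcal{H}$, $F_\mathcal{G}\mathcal{H}$ is the game with strategies $\Sigma_\mathcal{G}\times(Y\rightarrow\Sigma_\mathcal{H})$, moves $Y\times Y_\mathcal{H}$, play $P(\sigma,f)=(P_\mathcal{G}\sigma,P_\mathcal{H}(f(P_\mathcal{G}\sigma)))$, identity coutility, and $(\sigma,f)\in E_{F_\mathcal{G}\mathcal{H}}(k)$ iff $\sigma\in E_\mathcal{G}(\lambda y.\,k(y,P_\mathcal{H}(f\,y)))$ and $f(y')\in E_\mathcal{H}(\lambda z.\,k(y',z))$ for all $y'\in Y$. An $F_\mathcal{G}$-coalgebra is an object $\mathcal{H}$ with a morphism $\mathcal{H}\rightarrow F_\mathcal{G}\mathcal{H}$. Notation: $Y^*$ is the set of finite words over $Y$, $\epsilon$ the empty word, $Y^\omega$ the set of infinite streams over $Y$, $y\mathrel{::}w$ prepending $y$ to a word or stream; $\mathrm{hd}(y_0y_1\dots)=y_0$, $\mathrm{tl}(y_0y_1y_2\dots)=y_1y_2\dots$. For $\sigma:Y^*\rightarrow\Sigma_\mathcal{G}$, $\sigma_0=\mathrm{now}(\sigma)=\sigma(\epsilon)$ and $\sigma'=\mathrm{ltr}(\sigma)=\lambda y.\lambda w.\,\sigma(yw):Y\rightarrow(Y^*\rightarrow\Sigma_\mathcal{G})$. The $\omega$-iteration $\mathcal{G}_\omega:(\mathbf{1},R)\rightarrow(Y^\omega,R)$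 has strategies $\Sigma_\omega=Y^*\rightarrow\Sigma_\mathcal{G}$, moves $Y^\omega$, identity coutility, play function $P_\omega$ the unique function with $P_\omega\sigma=P_\mathcal{G}\sigma_0\mathrel{::}P_\omega(\lambda z.\,\sigma(P_\mathcal{G}\sigma_0\mathrel{::}z))$, and equilibrium function $E_\omega$ the greatest fixed point of the monotone operator $\Phi$ on $(\mathcal{P}\Sigma_\omega)^{(Y^\omega\rightarrow R)}$ (ordered pointwise by inclusion) defined by: $\sigma\in\Phi(\Gamma)(k)$ iff $\sigma_0\in E_\mathcal{G}(\lambda y.\,k(y\mathrel{::}P_\omega(\sigma'y)))$ and for all $y'\in Y$, $\sigma'y'\in\Gamma(\lambda z.\,k(y'\mathrel{::}z))$. *)

From Stdlib Require Import List.
Import ListNotations.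
Set Implicit Arguments.

(* An object H : (1,R) -> (Y_H,R) of 2Open_R.  Subsets are predicates;
   the coutility is the identity and is therefore not stored. *)
Record game (R : Type) := Game {
  strat : Type;
  moves : Type;
  play : strat -> moves;
  equil : (moves -> R) -> strat -> Prop
}.
Arguments Game {R}.

Definition is_morphism (R : Type) (H H' : game R)
  (bY : moves H -> moves H') (bS : strat H -> strat H') : Prop :=
  (forall s : strat H, bY (play H s) = play H' (bS s)) /\
  (forall (s : strat H) (k : moves H' -> R),
      equil H (fun y => k (bY y)) s -> equil H' k (bS s)).

Definition FG (R : Type) (G H : game R) : game R :=
  Game (strat G * (moves G -> strat H))%type
       (moves G * moves H)%type
       (fun sf => (play G (fst sf), play H (snd sf (play G (fst sf)))))
       (fun k sf =>
          equil G (fun y => k (y, play H (snd sf y))) (fst sf) /\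
          forall y' : moves G, equil H (fun z => k (y', z)) (snd sf y')).

(* Finite words Y^* are lists (y :: w is prepending); infinite streams Y^omega
   are functions nat -> Y. *)
Definition stream (Y : Type) := nat -> Y.
Definition shd (Y : Type) (s : stream Y) : Y := s 0.
Definition stl (Y : Type) (s : stream Y) : stream Y := fun n => s (S n).
Definition scons (Y : Type) (y : Y) (s : stream Y) : stream Y :=
  fun n => match n with 0 => y | S m => s m end.

Section Omega.
Variables (R : Type) (G : game R).

Definition Sigma_omega := list (moves G) -> strat G.

Definition now (s : Sigma_omega) : strat G := s nil.
Definition ltr (s : Sigma_omega) : moves G -> Sigma_omega :=
  fun y w => s (y :: w).

(* the first n moves played by sigma *)
Fixpoint hist (s : Sigma_omega) (n : nat) : list (moves G) :=
  match n with
  | 0 => nil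
  | S m => hist s m ++ [play G (s (hist s m))]
  end.

(* P_omega: the (unique) function with
   P_omega s = P_G s_0 :: P_omega (fun z => s (P_G s_0 :: z)) *)
Definition P_omega (s : Sigma_omega) : stream (moves G) :=
  fun n => play G (s (hist s n)).

Definition Phi (Gam : (stream (moves G) -> R) -> Sigma_omega -> Prop)
  : (stream (moves G) -> R) -> Sigma_omega -> Prop :=
  fun k s =>
    equil G (fun y => k (scons y (P_omega (ltr s y)))) (now s) /\
    forall y' : moves G, Gam (fun z => k (scons y' z)) (ltr s y').

(* E_omega: greatest fixed point of Phi (Knaster-Tarski: union of all
   post-fixed points, ordered pointwise by inclusion). *)
Definition E_omega (k : stream (moves G) -> R) (s : Sigma_omega) : Prop :=
  exists Gam : (stream (moves G) -> R) -> Sigma_omega -> Prop,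
    (forall k' s', Gam k' s' -> Phi Gam k' s') /\ Gam k s.

Definition G_omega : game R :=
  Game Sigma_omega (stream (moves G)) P_omega E_omega.

Definition alpha_Y (s : moves G_omega) : moves (FG G G_omega) := (shd s, stl s).
Definition alpha_S (s : strat G_omega) : strat (FG G G_omega) := (now s, ltr s).

End Omega.

(* The play component of the coalgebra map is the defining recursion of [P_omega]
   read backwards.  The equilibrium component is the unfolding half of
   Knaster-Tarski: the greatest fixed point of [Phi] is a post-fixed point, and
   [Phi E_omega (k o alpha_Y)] is literally the equilibrium condition of
   [FG G G_omega] at [k]. *)
From Stdlib Require Import List FunctionalExtensionality.
Import ListNotations.

Section OmegaIteration.
Variables (R : Type) (G : game R).

Lemma hist_succ (s : Sigma_omega G) (n : nat) :
  hist s (S n) = play G (now s) :: hist (ltr s (play G (now s))) n.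
Proof.
  induction n as [|n IH].
  - reflexivity.
  - change (hist s (S (S n))) with (hist s (S n) ++ [play G (s (hist s (S n)))]).
    rewrite IH. reflexivity.
Qed.

Lemma stl_P_omega (s : Sigma_omega G) :
  stl (P_omega s) = P_omega (ltr s (play G (now s))).
Proof.
  apply functional_extensionality. intros n.
  unfold stl, P_omega. rewrite hist_succ. reflexivity.
Qed.

Lemma Phi_monotone {Gam1 Gam2 : (stream (moves G) -> R) -> Sigma_omega G -> Prop} :
  (forall k s, Gam1 k s -> Gam2 k s) ->
  forall k s, Phi Gam1 k s -> Phi Gam2 k s.
Proof.
  intros Hsub k s [Hnow Hltr]. split.
  - exact Hnow.
  - intros y. apply Hsub, Hltr.
Qed.

Lemma post_fixed_sub_E_omega {Gam : (stream (moves G) -> R) -> Sigma_omega G -> Prop} :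
  (forall k s, Gam k s -> Phi Gam k s) ->
  forall k s, Gam k s -> E_omega k s.
Proof. intros Hpost k s Hs. exists Gam. split; assumption. Qed.

Lemma E_omega_unfold (k : stream (moves G) -> R) (s : Sigma_omega G) :
  E_omega k s -> Phi (@E_omega R G) k s.
Proof.
  intros [Gam [Hpost Hs]].
  apply (Phi_monotone (post_fixed_sub_E_omega Hpost)), Hpost, Hs.
Qed.

End OmegaIteration.

Theorem proposition10 (R : Type) (G : game R) :
  is_morphism (G_omega G) (FG G (G_omega G)) (@alpha_Y R G) (@alpha_S R G).
Proof.
  split.
  - intros s. unfold alpha_Y, alpha_S. simpl.
    rewrite stl_P_omega. reflexivity.
  - intros s k. apply E_omega_unfold.
Qed.
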